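(* Let $V$ be a quasi-regular mixed lattice vector space, let $A$ be a quasi-ideal and $B$ a positively generated $(\le)$-order convex subspace of $V$. Then $A+B$ is a mixed-order convex subspace. Moreover, if $B$ is an ideal then $A+B$ is a quasi-ideal, and if in addition $A$ is regular then $(A+B)_p=A_p+B_p$.
   Context: A mixed lattice vector space is a real vector space $V$ with two partial orderings $\le$ (initial) and $\preceq$ (specific), each compatible with the vector space structure, such that for all $x,y$ the mixed lower envelope $x\curlywedge y=\max\{w: w\preceq x,\ w\le y\}$ and mixed upper envelope $x\curlyvee y=\min\{w: x\preceq w,\ y\le w\}$ exist (max/min with respect to $\le$). $V_p=\{x:0\le x\}$, $V_{sp}=\{x:0\preceq x\}$, $E_p=E\cap V_p$, $E_{sp}=E\cap V_{sp}$. $V$ is quasi-regular if $V_{sp}$ is closed under $\curlywedge,\curlyvee$. A mixed lattice subspace is a linear subspace closed under $\curlywedge,\curlyvee$. A subspace $S$ is regular if $S=S_{sp}-S_{sp}$ and positively generated if $S=S_p-S_p$. A subset $U$ is $(\le)$-order convex if $x\le z\le y$ with $x,y\in U$ implies $z\in U$. A subspace $A$ is mixed-order convex if $y\in A$ and $0\preceq x\le y$ imply $x\in A$. An ideal is a $(\le)$-order convex mixed lattice subspace; a quasi-ideal is a mixed-order convex mixed lattice subspace. *)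

From HB Require Import structures.
From mathcomp Require Import all_boot all_order all_algebra.
From mathcomp Require Import reals.
Set Implicit Arguments. Unset Strict Implicit. Unset Printing Implicit Defensive.
Import GRing.Theory Num.Theory.
Local Open Scope ring_scope.

(* Mixed lattice vector spaces over the reals (R : realType), V : lmodType R.
   The two orderings are given as relations: [ile] (initial, <=) and
   [sle] (specific, \preceq). *)

Section MixedLattice.
Variables (R : realType) (V : lmodType R).
Implicit Types (le : V -> V -> Prop) (S U A B : V -> Prop).

Definition ordered_vs le : Prop :=
  [/\ (forall x, le x x),
      (forall x y, le x y -> le y x -> x = y),
      (forall x y z, le x y -> le y z -> le x z),
      (forall x y z, le x y -> le (x + z) (y + z))
    & (forall (a : R) x y, 0 <= a -> le x y -> le (a *: x) (a *: y))].

(* w is the mixed lower envelope  x ⋏ y = max_{<=} {w : w ⪯ x, w <= y} *)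
Definition is_mlow (ile sle : V -> V -> Prop) (x y w : V) : Prop :=
  [/\ sle w x, ile w y & forall u, sle u x -> ile u y -> ile u w].

(* w is the mixed upper envelope  x ⋎ y = min_{<=} {w : x ⪯ w, y <= w} *)
Definition is_mup (ile sle : V -> V -> Prop) (x y w : V) : Prop :=
  [/\ sle x w, ile y w & forall u, sle x u -> ile y u -> ile w u].

Definition mixed_lattice_vs (ile sle : V -> V -> Prop) : Prop :=
  [/\ ordered_vs ile, ordered_vs sle,
      (forall x y, exists w, is_mlow ile sle x y w)
    & (forall x y, exists w, is_mup ile sle x y w)].

Definition quasi_regular (ile sle : V -> V -> Prop) : Prop :=
  (forall x y w, sle 0 x -> sle 0 y -> is_mlow ile sle x y w -> sle 0 w) /\
  (forall x y w, sle 0 x -> sle 0 y -> is_mup ile sle x y w -> sle 0 w).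

Definition subspace S : Prop :=
  [/\ S 0, (forall x y, S x -> S y -> S (x + y))
    & (forall (a : R) x, S x -> S (a *: x))].

Definition mixed_lattice_subspace (ile sle : V -> V -> Prop) S : Prop :=
  [/\ subspace S,
      (forall x y w, S x -> S y -> is_mlow ile sle x y w -> S w)
    & (forall x y w, S x -> S y -> is_mup ile sle x y w -> S w)].

(* S_p = S ∩ V_p  and  S_sp = S ∩ V_sp *)
Definition pos_part (ile : V -> V -> Prop) S : V -> Prop :=
  fun x => S x /\ ile 0 x.

Definition sumset A B : V -> Prop :=
  fun z => exists a b, [/\ A a, B b & z = a + b].
Definition diffset A B : V -> Prop :=
  fun z => exists a b, [/\ A a, B b & z = a - b].

Definition positively_generated (ile : V -> V -> Prop) S : Prop :=
  forall x, S x <-> diffset (pos_part ile S) (pos_part ile S) x.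

Definition regular (sle : V -> V -> Prop) S : Prop :=
  forall x, S x <-> diffset (pos_part sle S) (pos_part sle S) x.

Definition order_convex (ile : V -> V -> Prop) U : Prop :=
  forall x y z, U x -> U y -> ile x z -> ile z y -> U z.

Definition mixed_order_convex (ile sle : V -> V -> Prop) A : Prop :=
  forall x y, A y -> sle 0 x -> ile x y -> A x.

Definition ideal (ile sle : V -> V -> Prop) S : Prop :=
  order_convex ile S /\ mixed_lattice_subspace ile sle S.

Definition quasi_ideal (ile sle : V -> V -> Prop) S : Prop :=
  mixed_order_convex ile sle S /\ mixed_lattice_subspace ile sle S.

End MixedLattice.

From HB Require Import structures.
From mathcomp Require Import all_boot all_order all_algebra.
From mathcomp Require Import reals.
Set Implicit Arguments. Unset Strict Implicit. Unset Printing Implicit Defensive.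
Import GRing.Theory.
Local Open Scope ring_scope.

(* Every element [a] of a subspace closed under the mixed upper envelope is
   dominated by the specifically positive element [0 ⋎ a] of that subspace.
   Given [0 ⪯ x <= a + b] with [b = b1 - b2], [b1, b2 ∈ B_p], the envelope
   [w = x ⋏ b1] lies in [B] by order convexity, while [0 ⪯ x - w <= 0 ⋎ a],
   so [x - w ∈ A] by mixed-order convexity.  The same trick with [x ⋏ y] and
   [x ⋎ y] shows that a mixed-order convex subspace whose elements are all
   dominated in this way is closed under the envelopes.  For the positive
   cone, if [0 <= a + b] with [a = a1 - a2 ∈ A_sp - A_sp], then
   [w = a1 ⋏ (a + b)] lies in [A_p] and [a + b - w] lies between [0] and
   [b ⋎ 0], hence in [B_p]. *)

Section OrderedVectorSpace.
Variables (R : realType) (V : lmodType R) (le : V -> V -> Prop).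
Hypothesis leV : ordered_vs le.

Lemma ovs_trans y x z : le x y -> le y z -> le x z.
Proof. by case: leV => _ _ le_trans _ _; apply: le_trans. Qed.

Lemma ovs_addr z x y : le x y -> le (x + z) (y + z).
Proof. by case: leV => _ _ _ le_add _; apply: le_add. Qed.

Lemma ovs_subr_ge0 x y : le 0 (y - x) <-> le x y.
Proof.
split=> [/(ovs_addr x)|/(ovs_addr (- x))]; first by rewrite add0r subrK.
by rewrite subrr.
Qed.

Lemma ovs_le_subr x y x' y' : le x' y' -> y - x = y' - x' -> le x y.
Proof. by move=> /ovs_subr_ge0 le_xy' eq_sub; apply/ovs_subr_ge0; rewrite eq_sub. Qed.

Lemma ovs_add x y x' y' : le x y -> le x' y' -> le (x + x') (y + y').
Proof.
move=> /(ovs_addr x') le1 /(ovs_addr y) le2; apply: ovs_trans le1 _.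
by rewrite [x' + y]addrC [y' + y]addrC in le2.
Qed.

Lemma ovs_add_ge0 x y : le 0 x -> le 0 y -> le 0 (x + y).
Proof. by move=> le0x le0y; have := ovs_add le0x le0y; rewrite addr0. Qed.

Lemma sumset_pos_part A B x :
  sumset (pos_part le A) (pos_part le B) x -> pos_part le (sumset A B) x.
Proof.
by move=> [a [b [[Aa le0a] [Bb le0b] ->]]]; split; [exists a, b | exact: ovs_add_ge0].
Qed.

End OrderedVectorSpace.

Section Subspaces.
Variables (R : realType) (V : lmodType R).
Implicit Types S A B : V -> Prop.

Lemma subspaceD S x y : subspace S -> S x -> S y -> S (x + y).
Proof. by case=> _ SD _; apply: SD. Qed.

Lemma subspaceN S x : subspace S -> S x -> S (- x).
Proof. by case=> _ _ SZ /(SZ (-1)); rewrite scaleN1r. Qed.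

Lemma subspaceB S x y : subspace S -> S x -> S y -> S (x - y).
Proof. by move=> subS Sx /(subspaceN subS); apply: subspaceD. Qed.

Lemma subspace_sumset A B : subspace A -> subspace B -> subspace (sumset A B).
Proof.
move=> [A0 AD AZ] [B0 BD BZ]; split.
- by exists 0, 0; rewrite addr0.
- move=> _ _ [a1 [b1 [Aa1 Bb1 ->]]] [a2 [b2 [Aa2 Bb2 ->]]].
  by exists (a1 + a2), (b1 + b2); split; [apply: AD | apply: BD | rewrite addrACA].
- move=> c _ [a [b [Aa Bb ->]]].
  by exists (c *: a), (c *: b); split; [apply: AZ | apply: BZ | rewrite scalerDr].
Qed.

End Subspaces.

Section MixedLatticeVectorSpace.
Variables (R : realType) (V : lmodType R) (ile sle : V -> V -> Prop).
Hypothesis mlV : mixed_lattice_vs ile sle.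
Implicit Types S A B : V -> Prop.

Let ileV : ordered_vs ile. Proof. by case: mlV. Qed.
Let sleV : ordered_vs sle. Proof. by case: mlV. Qed.
Let mlow_ex x y : exists w, is_mlow ile sle x y w. Proof. by case: mlV. Qed.
Let mup_ex x y : exists w, is_mup ile sle x y w. Proof. by case: mlV. Qed.

Definition mlow_closed S :=
  forall x y w, S x -> S y -> is_mlow ile sle x y w -> S w.

Definition mup_closed S :=
  forall x y w, S x -> S y -> is_mup ile sle x y w -> S w.

Definition sp_dominated S :=
  forall v, S v -> exists u, [/\ S u, sle 0 u & ile v u].

Lemma mup_closed_dominated S : S 0 -> mup_closed S -> sp_dominated S.
Proof.
move=> S0 Sup a Sa; have [a' mup_a'] := mup_ex 0 a.
by exists a'; split; [exact: Sup mup_a' | case: mup_a' ..].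
Qed.

Lemma sumset_dominated A B :
  sp_dominated A -> sp_dominated B -> sp_dominated (sumset A B).
Proof.
move=> domA domB _ [a [b [Aa Bb ->]]].
have [a' [Aa' sa' ia']] := domA a Aa; have [b' [Bb' sb' ib']] := domB b Bb.
by exists (a' + b'); split; [exists a', b' | exact: ovs_add_ge0 | exact: ovs_add].
Qed.

Lemma mixed_order_convex_lower S x y :
  subspace S -> mixed_order_convex ile sle S ->
  S y -> sle x y -> ile 0 x -> S x.
Proof.
move=> subS convS Sy sxy ix.
have S_yx : S (y - x).
  apply: convS Sy _ _; first exact/ovs_subr_ge0.
  by apply: (ovs_le_subr ileV ix); rewrite subKr subr0.
by rewrite -(subKr y x); apply: subspaceB.
Qed.

Lemma dominated_mlow_closed S :
  subspace S -> mixed_order_convex ile sle S -> sp_dominated S -> mlow_closed S.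
Proof.
move=> subS convS domS x y w Sx Sy [swx _ wmax].
have [u [Su su ixy_u]] := domS _ (subspaceB subS Sx Sy).
have x_u_w : ile (x - u) w.
  apply: wmax; first by apply: (ovs_le_subr sleV su); rewrite subKr subr0.
  by apply: (ovs_le_subr ileV ixy_u); rewrite !opprB addrCA.
have S_xw : S (x - w).
  apply: convS Su _ _; first exact/ovs_subr_ge0.
  by apply: (ovs_le_subr ileV x_u_w); rewrite !opprB addrCA.
by rewrite -(subKr x w); apply: subspaceB.
Qed.

Lemma dominated_mup_closed S :
  subspace S -> mixed_order_convex ile sle S -> sp_dominated S -> mup_closed S.
Proof.
move=> subS convS domS x y w Sx Sy [sxw _ wmin].
have [u [Su su iyx_u]] := domS _ (subspaceB subS Sy Sx).
have w_xu : ile w (x + u).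
  apply: wmin; first by apply: (ovs_le_subr sleV su); rewrite addrC addKr subr0.
  by apply: (ovs_le_subr ileV iyx_u); rewrite opprB addrA [u + x]addrC.
have S_wx : S (w - x).
  apply: convS Su _ _; first exact/ovs_subr_ge0.
  by apply: (ovs_le_subr ileV w_xu); rewrite opprB addrA [u + x]addrC.
by rewrite -(subrK x w); apply: subspaceD.
Qed.

Lemma dominated_mixed_lattice_subspace S :
  subspace S -> mixed_order_convex ile sle S -> sp_dominated S ->
  mixed_lattice_subspace ile sle S.
Proof.
move=> subS convS domS; split=> //.
- exact: dominated_mlow_closed.
- exact: dominated_mup_closed.
Qed.

Lemma le_add_sumset A B x a c :
  mixed_order_convex ile sle A -> B 0 -> order_convex ile B ->
  A a -> sle 0 a -> B c -> ile 0 c -> sle 0 x -> ile x (a + c) ->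
  sumset A B x.
Proof.
move=> convA B0 convB Aa sa Bc ic sx ix.
have [w [swx iwc wmax]] := mlow_ex x c.
have Bw : B w := convB _ _ _ B0 Bc (wmax 0 sx ic) iwc.
have x_a_w : ile (x - a) w.
  apply: wmax; first by apply: (ovs_le_subr sleV sa); rewrite subKr subr0.
  by apply: (ovs_le_subr ileV ix); rewrite opprB addrA [c + a]addrC.
exists (x - w), w; split=> //; last by rewrite subrK.
apply: convA Aa _ _; first exact/ovs_subr_ge0.
by apply: (ovs_le_subr ileV x_a_w); rewrite !opprB addrCA.
Qed.

Lemma mixed_order_convex_sumset A B :
  mixed_order_convex ile sle A -> sp_dominated A ->
  B 0 -> positively_generated ile B -> order_convex ile B ->
  mixed_order_convex ile sle (sumset A B).
Proof.
move=> convA domA B0 genB convB x _ [a [b [Aa Bb ->]]] sx ix.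
have [b1 [b2 [[Bb1 ib1] [_ ib2] eb]]] := (genB b).1 Bb.
have [a' [Aa' sa' ia']] := domA a Aa.
apply: (le_add_sumset convA B0 convB Aa' sa' Bb1 ib1 sx).
apply: (ovs_trans ileV ix); apply: (ovs_add ileV ia').
by apply: (ovs_le_subr ileV ib2); rewrite eb subKr subr0.
Qed.

Lemma le_sub_sumset_pos_part A B z a c :
  subspace A -> mixed_order_convex ile sle A -> B 0 -> order_convex ile B ->
  A a -> sle 0 a -> B c -> ile 0 c -> ile 0 z -> sle (z - c) a ->
  sumset (pos_part ile A) (pos_part ile B) z.
Proof.
move=> subA convA B0 convB Aa sa Bc ic iz szc.
have [w [swa iwz wmax]] := mlow_ex a z.
have iw : ile 0 w := wmax 0 sa iz.
have z_c_w : ile (z - c) w.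
  by apply: wmax szc _; apply: (ovs_le_subr ileV ic); rewrite subKr subr0.
have izw : ile 0 (z - w) by apply/ovs_subr_ge0.
exists w, (z - w); split; last by rewrite subrKC.
- by split=> //; apply: mixed_order_convex_lower subA convA Aa swa iw.
- split=> //; apply: (convB 0 c) => //.
  by apply: (ovs_le_subr ileV z_c_w); rewrite !opprB addrCA.
Qed.

Lemma pos_part_sumset A B x :
  subspace A -> mixed_order_convex ile sle A -> regular sle A ->
  B 0 -> order_convex ile B -> mup_closed B ->
  pos_part ile (sumset A B) x -> sumset (pos_part ile A) (pos_part ile B) x.
Proof.
move=> subA convA regA B0 convB Bup [[a [b [Aa Bb ->]]] iab].
have [a1 [a2 [[Aa1 sa1] [_ sa2] ea]]] := (regA a).1 Aa.
have [c mup_c] := mup_ex b 0.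
have Bc := Bup _ _ _ Bb B0 mup_c.
case: mup_c => sbc ic _.
apply: (le_sub_sumset_pos_part subA convA B0 convB Aa1 sa1 Bc ic iab).
apply: (ovs_le_subr sleV (ovs_add_ge0 sleV sa2 ((ovs_subr_ge0 sleV b c).2 sbc))).
by rewrite subr0 ea !opprD !opprK !addrA subrr add0r addrAC.
Qed.

End MixedLatticeVectorSpace.

Theorem theorem4p16 (R : realType) (V : lmodType R)
  (ile sle : V -> V -> Prop) (A B : V -> Prop) :
  mixed_lattice_vs ile sle ->
  quasi_regular ile sle ->
  quasi_ideal ile sle A ->
  subspace B -> positively_generated ile B -> order_convex ile B ->
  [/\ subspace (sumset A B),
      mixed_order_convex ile sle (sumset A B),
      (ideal ile sle B -> quasi_ideal ile sle (sumset A B))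
    & (ideal ile sle B -> regular sle A ->
       forall x, pos_part ile (sumset A B) x <->
                 sumset (pos_part ile A) (pos_part ile B) x)].
Proof.
move=> mlV _ [convA [subA _ Aup]] subB genB convB.
have [[A0 _ _] [B0 _ _]] := (subA, subB).
have subAB := subspace_sumset subA subB.
have domA := mup_closed_dominated mlV A0 Aup.
have convAB := mixed_order_convex_sumset mlV convA domA B0 genB convB.
split=> //.
- move=> [_ [_ _ Bup]]; split=> //; apply: dominated_mixed_lattice_subspace => //.
  exact: sumset_dominated domA (mup_closed_dominated mlV B0 Bup).
- move=> [_ [_ _ Bup]] regA x.
  split; first exact: (pos_part_sumset (x := x) mlV subA convA regA B0 convB Bup).
  by case: mlV => ileV _ _ _; apply: sumset_pos_part.
Qed.
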